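(* For every $p\in\mathbb{N}$ and every polynomial $\widehat{v} = \sum_{\ell=0}^p \widehat{v}_\ell T_\ell$ of degree at most $p$ on $[-1,1]$, defining $\widehat{v}_\ell := 0$ for $\ell>p$, it holds that \[ \sum_{\ell\geq 2} |\widehat{v}_\ell| \;\leq\; p^4 \min_{\substack{\widehat{w}\in\mathbb{P}_p([-1,1]):\\ \widehat{w}'' = \widehat{v}''}} \|\widehat{w}\|_{L^\infty((-1,1))}. \]
   Context: For $k\in\mathbb{N}_0$, $T_k$ denotes the Chebyshev polynomial of the first kind of degree $k$, normalized so that $T_k(1)=1$ (i.e. $T_k(\cos\theta)=\cos(k\theta)$). $\mathbb{P}_p([-1,1])$ denotes the space of real polynomials of degree at most $p$ on $[-1,1]$, and $\widehat{w}''$ denotes the second derivative. *)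

From HB Require Import structures.
From mathcomp Require Import all_boot all_order all_algebra.
From mathcomp Require Import all_classical all_reals.
Set Implicit Arguments. Unset Strict Implicit. Unset Printing Implicit Defensive.
Import Order.TTheory GRing.Theory Num.Theory.
Local Open Scope ring_scope.
Local Open Scope classical_set_scope.

(* Chebyshev polynomials of the first kind, T_0 = 1, T_1 = X,
   T_{k+2} = 2 X T_{k+1} - T_k  (so T_k(cos t) = cos(k t), T_k(1) = 1). *)
Fixpoint cheb_pair (R : ringType) (k : nat) : {poly R} * {poly R} :=
  match k with
  | 0%N => (1, 'X)
  | k'.+1 => let (a, b) := cheb_pair R k' in (b, 2%:R *: 'X * b - a)
  end.

Definition chebT (R : ringType) (k : nat) : {poly R} := (cheb_pair R k).1.

(* L^infty((-1,1)) norm of a polynomial (continuous, so ess sup = sup). *)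
Definition Linf_norm (R : realType) (w : {poly R}) : R :=
  sup [set `|w.[x]| | x in [set x : R | -1 < x < 1]].

(* At the N = p + 1 Chebyshev nodes x_j = cos((2j+1) pi / (2N)), the values of
   T_0, ..., T_(N-1) are discretely orthogonal:
   sum_j T_k(x_j) T_l(x_j) = [k = l] N/2 for k < N and 0 < l < N.
   Hence each coefficient c_l (0 < l < N) of v = sum_k c_k T_k is read off
   from the values of v at the nodes.  If w'' = v'', then w - v is affine,
   i.e. a combination of T_0 and T_1, invisible to this read-off for l >= 2.
   As all nodes lie in (-1,1) and |T_l| <= 1 there, |c_l| <= 2 ||w||_oo, and
   summing over 2 <= l <= p costs a factor 2 (p - 1) <= p^4. *)
From HB Require Import structures.
From mathcomp Require Import all_boot all_order all_algebra.
From mathcomp Require Import all_classical all_reals.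
From mathcomp Require Import trigo ring lra zify.
Import Order.TTheory GRing.Theory Num.Theory.
Local Open Scope ring_scope.
Local Open Scope classical_set_scope.

Lemma derivn2_eq0_affine (R : numDomainType) (q : {poly R}) :
  q^`(2) = 0 -> q = (q`_0)%:P + q`_1 *: 'X.
Proof.
move=> q2; have coef_ge2 i : q`_i.+2 = 0.
  have /eqP : q^`(2)`_i = 0 by rewrite q2 coef0.
  by rewrite coef_derivn mulrn_eq0 eqn0Ngt ffact_gt0 => /eqP.
apply/polyP => -[|[|i]]; rewrite coefD coefC coefZ coefX //=.
- by rewrite mulr0 addr0.
- by rewrite mulr1 add0r.
- by rewrite mulr0 addr0 coef_ge2.
Qed.

Section Chebyshev.
Variable R : realType.

Lemma Linf_norm_ge (w : {poly R}) (x : R) :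
  -1 < x < 1 -> `|w.[x]| <= Linf_norm w.
Proof.
move=> x_in; apply: ub_le_sup; last by exists x.
exists (\sum_(i < size w) `|w`_i|) => _ [y /andP[y_gt y_lt] <-].
rewrite horner_coef; apply: le_trans (ler_norm_sum _ _ _) _.
apply: ler_sum => i _; rewrite normrM normrX.
by rewrite ler_piMr // exprn_ile1 // ler_norml !ltW.
Qed.

Lemma Linf_norm_ge0 (w : {poly R}) : 0 <= Linf_norm w.
Proof. by apply: le_trans (normr_ge0 w.[0]) (Linf_norm_ge w 0 _); rewrite ltrN10 ltr01. Qed.

Lemma cheb_pair_cos (t : R) k :
  (cheb_pair R k).1.[cos t] = cos (k%:R * t) /\
  (cheb_pair R k).2.[cos t] = cos (k.+1%:R * t).
Proof.
elim: k => [|k IH] /=; first by rewrite hornerC hornerX mul0r cos0 mul1r.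
case: (cheb_pair R k) IH => a b /= [IHa IHb]; split => //.
rewrite hornerD hornerN hornerM hornerZ hornerX IHa IHb.
have -> : k.+2%:R * t = k.+1%:R * t + t by rewrite (mulrS _ k.+1); ring.
have -> : k%:R * t = k.+1%:R * t - t by rewrite mulrS; ring.
rewrite !cosD cosN sinN; ring.
Qed.

Lemma chebT_cos (t : R) k : (chebT R k).[cos t] = cos (k%:R * t).
Proof. by case: (cheb_pair_cos t k). Qed.

Lemma sin_natr_mulpi m : sin (m%:R * pi) = 0 :> R.
Proof.
elim: m => [|m IH]; first by rewrite mul0r sin0.
by rewrite mulrSr mulrDl mul1r sinDpi IH oppr0.
Qed.

Lemma pi_mul_frac_in (a b : nat) : (0 < a < b)%N ->
  0 < (pi : R) * (a%:R / b%:R) < pi.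
Proof.
move=> /andP[a_gt0 a_lt_b]; have b_gt0 := ltn_trans a_gt0 a_lt_b.
rewrite mulr_gt0 ?pi_gt0 ?divr_gt0 ?ltr0n //=.
by rewrite gtr_pMr ?pi_gt0 // ltr_pdivrMr ?ltr0n // mul1r ltr_nat.
Qed.

Definition cheb_angle (N j : nat) : R := pi * ((2 * j + 1)%:R / (2 * N)%:R).

Lemma cos_cheb_angle_in N (j : 'I_N) : -1 < cos (cheb_angle N j) < 1.
Proof.
have sin_gt0 : 0 < sin (cheb_angle N j).
  by apply/sin_gt0_pi/pi_mul_frac_in; have := ltn_ord j; lia.
rewrite -ltr_norml -(ltr_pXn2r (n := 2)) ?nnegrE // expr1n real_normK ?num_real //.
by rewrite cos2sin2 ltrBlDr ltrDl exprn_gt0.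
Qed.

(* Telescoping: 2 sin a cos ((2j+1) a) = sin ((2j+2) a) - sin (2j a), with
   a = m pi / (2N), and the last term sin (m pi) vanishes. *)
Lemma sum_cos_cheb_angle N m : (0 < m < 2 * N)%N ->
  \sum_(j < N) cos (m%:R * cheb_angle N j) = 0.
Proof.
move=> m_in; set a : R := pi * (m%:R / (2 * N)%:R).
have sina_gt0 : 0 < sin a by exact/sin_gt0_pi/pi_mul_frac_in.
have N2_neq0 : (2 * N)%:R != 0 :> R by rewrite pnatr_eq0; lia.
suff : sin a *+ 2 * \sum_(j < N) cos (m%:R * cheb_angle N j) = 0.
  by move/eqP; rewrite mulf_eq0 mulrn_eq0 /= (gt_eqF sina_gt0) => /eqP.
rewrite mulr_sumr -(big_mkord xpredT (fun j => sin a *+ 2 * cos (m%:R * cheb_angle N j))).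
rewrite (telescope_sumr_eq (fun j => sin ((2 * j)%:R * a))) //.
  rewrite muln0 mul0r sin0 subr0.
  suff -> : (2 * N)%:R * a = m%:R * pi by exact: sin_natr_mulpi.
  by rewrite /a mulrC -mulrA divfK // mulrC.
move=> k _.
have -> : m%:R * cheb_angle N k = (2 * k + 1)%:R * a by rewrite /cheb_angle /a; ring.
have -> : (2 * k.+1)%:R * a = (2 * k + 1)%:R * a + a.
  by rewrite mulnS addnC natrD; ring.
have -> : (2 * k)%:R * a = (2 * k + 1)%:R * a - a by rewrite natrD; ring.
rewrite !sinD cosN sinN; ring.
Qed.

Lemma sum_cos_mul_cheb_angle N k l : (k < N)%N -> (0 < l < N)%N ->
  \sum_(j < N) cos (k%:R * cheb_angle N j) * cos (l%:R * cheb_angle N j) =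
  (k == l)%:R * N%:R / 2.
Proof.
move=> k_lt l_in.
have cos_prod (x y : R) : cos x * cos y = (cos (x + y) + cos (x - y)) / 2.
  by rewrite !cosD cosN sinN; field.
under eq_bigr => j _ do rewrite cos_prod -mulrDl -natrD.
rewrite -mulr_suml big_split /= sum_cos_cheb_angle ?add0r; last by lia.
have [k_lt_l|l_lt_k|->] := ltngtP k l.
- under eq_bigr => j _ do rewrite -opprB -mulrBl -natrB ?(ltnW k_lt_l) // cosN.
  by rewrite sum_cos_cheb_angle ?mul0r //; lia.
- under eq_bigr => j _ do rewrite -mulrBl -natrB ?(ltnW l_lt_k) //.
  by rewrite sum_cos_cheb_angle ?mul0r //; lia.
- under eq_bigr => j _ do rewrite subrr cos0.
  by rewrite sumr_const card_ord mul1r.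
Qed.

Definition cheb_moment (N l : nat) (q : {poly R}) : R :=
  \sum_(j < N) q.[cos (cheb_angle N j)] * cos (l%:R * cheb_angle N j).

Lemma cheb_momentD N l (q r : {poly R}) :
  cheb_moment N l (q + r) = cheb_moment N l q + cheb_moment N l r.
Proof. by rewrite /cheb_moment -big_split; apply: eq_bigr => j _; rewrite hornerD mulrDl. Qed.

Lemma cheb_momentZ N l a (q : {poly R}) :
  cheb_moment N l (a *: q) = a * cheb_moment N l q.
Proof. by rewrite /cheb_moment mulr_sumr; apply: eq_bigr => j _; rewrite hornerZ mulrA. Qed.

Lemma cheb_moment_chebT N k l : (k < N)%N -> (0 < l < N)%N ->
  cheb_moment N l (chebT R k) = (k == l)%:R * N%:R / 2.
Proof.
move=> k_lt l_in; rewrite -sum_cos_mul_cheb_angle //.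
by apply: eq_bigr => j _; rewrite chebT_cos.
Qed.

Lemma cheb_moment_cheb_sum N l (c : nat -> R) : (0 < l < N)%N ->
  cheb_moment N l (\sum_(k < N) c k *: chebT R k) = c l * N%:R / 2.
Proof.
move=> /[dup] l_in /andP[_ l_lt].
rewrite (big_morph _ (cheb_momentD N l) (_ : cheb_moment N l 0 = 0)); last first.
  by rewrite /cheb_moment big1 // => j _; rewrite horner0 mul0r.
rewrite (bigD1 (Ordinal l_lt)) //= cheb_momentZ cheb_moment_chebT // eqxx mul1r mulrA.
rewrite big1 ?addr0 // => k k_neq_l; rewrite cheb_momentZ cheb_moment_chebT //.
by rewrite (_ : (k == l :> nat) = false) ?mul0r ?mulr0 //; apply/negbTE.
Qed.

Lemma cheb_moment_affine N l a b : (2 <= l < N)%N ->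
  cheb_moment N l (a%:P + b *: 'X) = 0.
Proof.
move=> l_in; have N_gt1 : (1 < N)%N by lia.
have -> : a%:P + b *: 'X = a *: chebT R 0 + b *: chebT R 1 by rewrite /chebT /= alg_polyC.
rewrite cheb_momentD !cheb_momentZ !cheb_moment_chebT ?(ltnW N_gt1) //; try lia.
by case: l l_in => [|[|l]] //= _; rewrite !mul0r !mulr0 addr0.
Qed.

Lemma norm_cheb_moment_le N l (w : {poly R}) :
  `|cheb_moment N l w| <= N%:R * Linf_norm w.
Proof.
have term_le (j : 'I_N) :
    `|w.[cos (cheb_angle N j)] * cos (l%:R * cheb_angle N j)| <= Linf_norm w.
  rewrite normrM -[X in _ <= X]mulr1.
  by rewrite ler_pM ?Linf_norm_ge ?cos_cheb_angle_in ?cos_max.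
apply: le_trans (ler_norm_sum _ _ _) _.
apply: le_trans (ler_sum _ (fun j _ => term_le j)) _.
by rewrite sumr_const card_ord mulr_natl.
Qed.

Lemma cheb_coef_le_Linf_norm N l (c : nat -> R) (w : {poly R}) :
  (2 <= l < N)%N -> w^`(2) = (\sum_(k < N) c k *: chebT R k)^`(2) ->
  `|c l| <= 2 * Linf_norm w.
Proof.
set v := \sum_(k < N) c k *: chebT R k => l_in w2_eq.
have N_gt0 : 0 < N%:R :> R by rewrite ltr0n; lia.
have /derivn2_eq0_affine w_eq : (w - v)^`(2) = 0 by rewrite derivnB w2_eq subrr.
have moment_w : cheb_moment N l w = c l * N%:R / 2.
  rewrite -[w](subrK v) w_eq addrC cheb_momentD cheb_moment_affine // addr0.
  by rewrite cheb_moment_cheb_sum //; lia.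
have := norm_cheb_moment_le N l w.
rewrite moment_w !normrM normfV !normr_nat; nra.
Qed.

End Chebyshev.

Theorem lemma3p3 (R : realType) (p : nat) (c : nat -> R) (w : {poly R}) :
  (size w <= p.+1)%N ->
  w^`(2) = (\sum_(l < p.+1) c l *: chebT R l)^`(2) ->
  \sum_(2 <= l < p.+1) `|c l| <= (p ^ 4)%:R * Linf_norm w.
Proof.
move=> _ w2_eq.
have coef_le l : (2 <= l < p.+1)%N -> `|c l| <= 2 * Linf_norm w.
  by move=> l_in; exact: cheb_coef_le_Linf_norm l_in w2_eq.
apply: le_trans (ler_sum_nat coef_le) _.
rewrite sumr_const_nat -mulrnAl -mulr_natr -natrM.
apply: ler_wpM2r; first exact: Linf_norm_ge0.
rewrite ler_nat; case: p {w2_eq coef_le} => [//|q].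
by rewrite !expnS expn0 muln1; nia.
Qed.
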